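(* Let $T$ and $Q$ be selfadjoint bounded operators on a Hilbert space $V$, and assume $Q$ is nonnegative. Then the operator $A:=Q(I+iT)^{-1}\in\mathcal{L}(V)$ is sectorial of some angle $\theta<\frac{\pi}{2}$.
   Context: A closed linear operator $A$ on a Banach space is sectorial of angle $\theta\in(0,\pi)$ if $\sigma(A)\subseteq\Sigma_\theta:=\{z\in\mathbb{C}:|\arg z|\le\theta\}$ and for every $\theta'\in(\theta,\pi)$ one has $\sup_{z\notin\Sigma_{\theta'}}\|zR(z,A)\|<\infty$, where $R(z,A)=(z-A)^{-1}$. *)

From mathcomp Require Import complex.
From mathcomp Require Import all_boot all_algebra.
From mathcomp Require Import all_classical all_reals all_analysis.
From mathcomp Require Import all_order.
Import Order.TTheory GRing.Theory Num.Theory.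
Import numFieldNormedType.Exports.

Set Implicit Arguments.
Unset Strict Implicit.
Unset Printing Implicit Defensive.

Local Open Scope ring_scope.
Local Open Scope complex_scope.
Local Open Scope classical_set_scope.

Section OperatorDefs.
Variable R : realType.
Variable V : normedModType R[i].

Definition inner_product (ip : V -> V -> R[i]) : Prop :=
  [/\ forall (a : R[i]) (x y z : V), ip (a *: x + y) z = a * ip x z + ip y z,
      forall x y : V, ip y x = (ip x y)^*
    & forall x : V, ip x x = `|x| ^+ 2].

Definition bounded_op (A : V -> V) : Prop :=
  (forall (a : R[i]) (x y : V), A (a *: x + y) = a *: A x + A y) /\
  exists M : R, forall x : V, `|A x| <= M%:C * `|x|.

Definition selfadjoint (ip : V -> V -> R[i]) (A : V -> V) : Prop :=
  forall x y : V, ip (A x) y = ip x (A y).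

Definition is_inverse (B S : V -> V) : Prop :=
  (forall x, S (B x) = x) /\ (forall x, B (S x) = x).

Definition resolvent_set (A : V -> V) : set R[i] :=
  [set z | exists S, bounded_op S /\ is_inverse (fun x => z *: x - A x) S].

Definition spectrum (A : V -> V) : set R[i] := ~` resolvent_set A.

(* closed sector Sigma_theta = {z : |arg z| <= theta} (0 included) *)
Definition sector (theta : R) : set R[i] :=
  [set z | z = 0 \/
     exists phi : R, `|phi| <= theta /\ z = `|z| * ((cos phi) +i* (sin phi))].

(* sectorial of angle theta, for an operator in L(V) (hence closed) *)
Definition sectorial (A : V -> V) (theta : R) : Prop :=
  [/\ bounded_op A, 0 < theta < pi,
      spectrum A `<=` sector theta &
      forall theta' : R, theta < theta' < pi ->
        exists M : R, forall z : R[i], ~ sector theta' z ->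
          forall S, bounded_op S -> is_inverse (fun x => z *: x - A x) S ->
          forall x, `|z *: S x| <= M%:C * `|x| ].

End OperatorDefs.

(* Re <(I + iT) x, x> = |x|^2, so I + iT is coercive and, by the Lax-Milgram
   theorem (a consequence of Banach's fixed point theorem), has an inverse S
   with |S| <= 1.  Since z - QS = (z (I + iT) - Q) S, it suffices to invert
   W := z (I + iT) - Q.  With t := <Tx, x> in [-tau |x|^2, tau |x|^2] and
   q := <Qx, x> >= 0 we have <Wx, x> = z (|x|^2 + i t) - q; when
   Re z < |z| / (tau + 2), a unimodular u with Re u <= 0 makes uW coercive
   with constant |z| / (tau + 2), whence |z| |(z - QS)^-1| <= (1 + tau) (tau + 2).
   Every z outside the sector of angle acos (1 / (tau + 2)) < pi / 2 is of
   this kind. *)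

From mathcomp Require Import complex.
From mathcomp Require Import all_boot all_algebra.
From mathcomp Require Import all_classical all_reals all_analysis.
From mathcomp Require Import all_order.
From mathcomp Require Import ring lra.
Import Order.TTheory GRing.Theory Num.Theory.
Import numFieldNormedType.Exports.
Import Normc.
Local Open Scope ring_scope.
Local Open Scope complex_scope.
Local Open Scope classical_set_scope.
Set Implicit Arguments.
Unset Strict Implicit.
Unset Printing Implicit Defensive.

Section RealNorm.
Variables (R : realType) (V : normedModType R[i]).

Lemma normcE (a : R[i]) : `|a| = (normc a)%:C.
Proof. by case: a. Qed.

Lemma normc_ge0 (a : R[i]) : 0 <= normc a.
Proof. by rewrite -ler0c -normcE. Qed.

(* The norm of a normed R[i]-module is a nonnegative real embedded in R[i];
   [vnorm] is that real number, so that norm estimates live in an ordered field. *)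
Definition vnorm (x : V) : R := complex.Re `|x|.

Lemma vnormE x : `|x| = (vnorm x)%:C.
Proof. by rewrite RRe_real // ger0_real. Qed.

Lemma vnorm_ge0 x : 0 <= vnorm x.
Proof. by rewrite -ler0c -vnormE. Qed.

Lemma vnormZ a x : vnorm (a *: x) = normc a * vnorm x.
Proof. by rewrite /vnorm normrZ normcE vnormE -rmorphM. Qed.

Lemma vnormD x y : vnorm (x + y) <= vnorm x + vnorm y.
Proof. by rewrite -lecR rmorphD /= -!vnormE ler_normD. Qed.

Lemma vnormN x : vnorm (- x) = vnorm x.
Proof. by rewrite /vnorm normrN. Qed.

Lemma vnorm0 : vnorm 0 = 0.
Proof. by rewrite /vnorm normr0. Qed.

Lemma vnorm_eq0 x : (vnorm x == 0) = (x == 0).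
Proof. by rewrite -[x == 0]normr_eq0 vnormE -(inj_eq (@complexI R)). Qed.

Lemma ler_vnorm (M : R) x y : (`|x| <= M%:C * `|y|) = (vnorm x <= M * vnorm y).
Proof. by rewrite !vnormE -rmorphM lecR. Qed.

End RealNorm.

Section InnerProduct.
Variables (R : realType) (V : normedModType R[i]) (ip : V -> V -> R[i]).
Hypothesis hip : inner_product ip.

Lemma ipDl x y z : ip (x + y) z = ip x z + ip y z.
Proof. by case: hip => h _ _; have := h 1 x y z; rewrite scale1r mul1r. Qed.

Lemma ip0l z : ip 0 z = 0.
Proof. by apply: (addrI (ip 0 z)); rewrite -ipDl !addr0. Qed.

Lemma ipZl a x z : ip (a *: x) z = a * ip x z.
Proof. by case: hip => h _ _; have := h a x 0 z; rewrite !addr0 ip0l addr0. Qed.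

Lemma ipNl x z : ip (- x) z = - ip x z.
Proof. by rewrite -scaleN1r ipZl mulN1r. Qed.

Lemma ipC x y : ip y x = (ip x y)^*.
Proof. by case: hip. Qed.

Lemma ipDr x y z : ip z (x + y) = ip z x + ip z y.
Proof. by rewrite ipC ipDl rmorphD /= -!ipC. Qed.

Lemma ipZr a x z : ip z (a *: x) = a^* * ip z x.
Proof. by rewrite ipC ipZl rmorphM /= -!ipC. Qed.

Lemma ip0r z : ip z 0 = 0.
Proof. by rewrite ipC ip0l conjc0. Qed.

Lemma ipxx x : ip x x = (vnorm x ^+ 2)%:C.
Proof. by case: hip => _ _ ->; rewrite vnormE -rmorphXn. Qed.

Lemma Re_ipC x y : complex.Re (ip y x) = complex.Re (ip x y).
Proof. by rewrite ipC; case: (ip x y). Qed.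

Lemma vnorm_combination_sqr (s t : R) x y :
  vnorm (s%:C *: x + t%:C *: y) ^+ 2 =
  s ^+ 2 * vnorm x ^+ 2 + 2 * s * t * complex.Re (ip x y) + t ^+ 2 * vnorm y ^+ 2.
Proof.
have -> : vnorm (s%:C *: x + t%:C *: y) ^+ 2 =
    complex.Re (ip (s%:C *: x + t%:C *: y) (s%:C *: x + t%:C *: y)).
  by rewrite ipxx.
rewrite !ipDl !ipZl !ipDr !ipZr /= !ipxx.
have := Re_ipC x y; case: (ip x y) => p q; case: (ip y x) => p' q' /= ->.
ring.
Qed.

Lemma Re_ip_le x y : complex.Re (ip x y) <= vnorm x * vnorm y.
Proof.
have [-> | x0] := eqVneq x 0; first by rewrite ip0l vnorm0 mul0r.
have [-> | y0] := eqVneq y 0; first by rewrite ip0r vnorm0 mulr0.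
have xy_gt0 : 0 < vnorm x * vnorm y.
  by rewrite mulr_gt0 // lt_def vnorm_ge0 vnorm_eq0 ?x0 ?y0.
have := sqr_ge0 (vnorm ((vnorm y)%:C *: x + (- vnorm x)%:C *: y)).
rewrite vnorm_combination_sqr => h.
rewrite -subr_ge0 -(pmulr_rge0 _ xy_gt0); nra.
Qed.

Lemma ip_selfadjoint_real A x :
  selfadjoint ip A -> ip (A x) x = (complex.Re (ip (A x) x))%:C.
Proof.
move=> A_sa; have : ip (A x) x = (ip (A x) x)^* by rewrite [in LHS]A_sa -ipC.
case: (ip (A x) x) => p q /eqP; rewrite eq_complex /= => /andP[_ /eqP q0].
by apply/eqP; rewrite eq_complex /= eqxx /=; apply/eqP; lra.
Qed.

Lemma Re_ip_bounded A (M : R) : (forall x, vnorm (A x) <= M * vnorm x) ->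
  forall x, `|complex.Re (ip (A x) x)| <= M * vnorm x ^+ 2.
Proof.
move=> A_bd x; have := Re_ip_le (A x) x; have := Re_ip_le (- A x) x.
rewrite ipNl vnormN /= => leN le.
have : vnorm (A x) * vnorm x <= M * vnorm x ^+ 2.
  by rewrite expr2 mulrA ler_wpM2r ?vnorm_ge0.
by rewrite ler_norml; lra.
Qed.

End InnerProduct.

Section BoundedOperator.
Variables (R : realType) (V : normedModType R[i]).

Lemma linear_add (f g : V -> V) : linear f -> linear g -> linear (fun x => f x + g x).
Proof. by move=> f_lin g_lin a x y; rewrite f_lin g_lin scalerDr addrACA. Qed.

Lemma linear_id : linear (fun x : V => x).
Proof. by []. Qed.

Lemma linear_sub (f g : V -> V) : linear f -> linear g -> linear (fun x => f x - g x).
Proof. by move=> f_lin g_lin a x y; rewrite f_lin g_lin scalerBr opprD addrACA. Qed.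

Lemma linear_scale (c : R[i]) (f : V -> V) : linear f -> linear (fun x => c *: f x).
Proof. by move=> f_lin a x y; rewrite f_lin scalerDr !scalerA mulrC. Qed.

Lemma linear_comp (f g : V -> V) : linear f -> linear g -> linear (f \o g).
Proof. by move=> f_lin g_lin a x y /=; rewrite g_lin f_lin. Qed.

Lemma linear_inverse (f g : V -> V) :
  linear f -> cancel f g -> cancel g f -> linear g.
Proof. by move=> f_lin fK gK a x y; rewrite -[x]gK -[y]gK -f_lin !fK. Qed.

Lemma bounded_opP (A : V -> V) : bounded_op A <->
  linear A /\ exists2 M : R, 0 <= M & forall x, vnorm (A x) <= M * vnorm x.
Proof.
split=> [[A_lin [M A_bd]] | [A_lin [M _ A_bd]]]; split => //; last first.
  by exists M => x; rewrite ler_vnorm.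
exists `|M|; first exact: normr_ge0.
move=> x; apply: le_trans (ler_wpM2r (vnorm_ge0 x) (ler_norm M)).
by rewrite -ler_vnorm.
Qed.

End BoundedOperator.

Section ContractionFixedPoint.
Variables (R : realType) (V : completeNormedModType R[i]) (f : V -> V) (q : R).
Hypotheses (q_ge0 : 0 <= q) (q_lt1 : q < 1)
  (f_contr : forall a b, vnorm (f a - f b) <= q * vnorm (a - b)).

Let y n := iter n f 0.
Let d := vnorm (y 1 - y 0).

Lemma iter_contraction_step n : vnorm (y n.+1 - y n) <= q ^+ n * d.
Proof.
elim: n => [|n IH]; first by rewrite expr0 mul1r.
apply: le_trans (f_contr _ _) _; rewrite exprS -mulrA; exact: ler_wpM2l.
Qed.

Lemma iter_contraction_dist n m :
  (n <= m)%N -> (1 - q) * vnorm (y m - y n) <= q ^+ n * d.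
Proof.
move=> /subnKC <-; set k := (m - n)%N; rewrite -[leRHS]mulr1.
suff : (1 - q) * vnorm (y (n + k) - y n) <= q ^+ n * d * (1 - q ^+ k).
  by move/le_trans; apply; rewrite ler_wpM2l ?mulr_ge0 ?exprn_ge0 ?vnorm_ge0 //
    gerBl exprn_ge0.
elim: k => [|k IH]; first by rewrite addn0 subrr vnorm0 mulr0 expr0 subrr mulr0.
have := vnormD (y (n + k).+1 - y (n + k)) (y (n + k) - y n).
rewrite addrA subrK addnS => tri.
have q1_ge0 : 0 <= 1 - q by rewrite subr_ge0 ltW.
have := ler_wpM2l q1_ge0 tri; have := ler_wpM2l q1_ge0 (iter_contraction_step (n + k)).
rewrite exprD exprS; nra.
Qed.

Lemma iter_contraction_cvg : cvgn y.
Proof.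
apply/cauchy_cvgP/cauchy_exP => e e_gt0.
have e'_gt0 : 0 < complex.Re e by move: e_gt0; rewrite ltcE => /andP[].
have q1_gt0 : 0 < 1 - q by rewrite subr_gt0.
have d_ge0 : 0 <= d := vnorm_ge0 _.
have /cvgrPdist_lt/(_ (complex.Re e * (1 - q) / (d + 1))) : q ^+ n @[n --> \oo] --> 0.
  by apply: cvg_expr; rewrite ger0_norm.
case=> [|N _ qN]; first by rewrite divr_gt0 ?mulr_gt0 // ltr_wpDl.
exists (y N), N => // n /= Nn; rewrite -ball_normE /= -opprB normrN.
rewrite -(RRe_real (gtr0_real e_gt0)) vnormE ltcR.
have := qN N (leqnn N); rewrite /= sub0r normrN ger0_norm ?exprn_ge0 //.
rewrite ltr_pdivlMr ?ltr_wpDl // => qNd.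
have := iter_contraction_dist Nn; have := vnorm_ge0 (y n - y N).
have := exprn_ge0 N q_ge0; nra.
Qed.

Lemma contraction_fixed_point : exists x, f x = x.
Proof.
have yl : y @ \oo --> limn y := iter_contraction_cvg.
suff yfl : y @ \oo --> f (limn y) by exists (limn y); exact: cvg_unique yfl yl.
rewrite -cvg_shiftS; apply/cvgrPdist_lt => e e_gt0.
move/cvgrPdist_lt: yl => /(_ e e_gt0); apply: filterS => n /=; apply: le_lt_trans.
rewrite !vnormE lecR; apply: le_trans (f_contr _ _) _.
by rewrite ler_piMl ?vnorm_ge0 // ltW.
Qed.

End ContractionFixedPoint.

Section LaxMilgram.
Variables (R : realType) (V : completeNormedModType R[i]) (ip : V -> V -> R[i]).
Hypothesis hip : inner_product ip.
Variables (B : V -> V) (k M : R).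
Hypotheses (B_lin : linear B) (B_bounded : forall x, vnorm (B x) <= M * vnorm x)
  (k_gt0 : 0 < k)
  (B_coercive : forall x, k * vnorm x ^+ 2 <= complex.Re (ip (B x) x)).

Lemma coercive_lower_bound x : k * vnorm x <= vnorm (B x).
Proof.
have [->|x0] := eqVneq x 0; first by rewrite vnorm0 mulr0 vnorm_ge0.
have x_gt0 : 0 < vnorm x by rewrite lt_def vnorm_eq0 x0 vnorm_ge0.
rewrite -(ler_pM2r x_gt0) -mulrA -expr2.
exact: le_trans (B_coercive x) (Re_ip_le hip _ _).
Qed.

Lemma coercive_injective : injective B.
Proof.
move=> x y Bxy; apply/eqP; rewrite -subr_eq0 -vnorm_eq0 eq_le vnorm_ge0 andbT.
have := coercive_lower_bound (x - y).
by rewrite (zmod_morphism_linear B_lin) Bxy subrr vnorm0 pmulr_rle0.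
Qed.

Lemma coercive_damped_contraction : exists2 eps : R, 0 < eps &
  exists2 q : R, 0 <= q < 1 & forall x, vnorm (x - eps%:C *: B x) <= q * vnorm x.
Proof.
(* With r := k / M' and eps := r / M',
   |x - eps B x|^2 <= (1 - 2 eps k + eps^2 M'^2) |x|^2 = (1 - r^2) |x|^2. *)
pose M' := Num.max M k; pose r := k / M'.
have M'_gt0 : 0 < M' by rewrite lt_max k_gt0 orbT.
have r_gt0 : 0 < r by rewrite divr_gt0.
have r_le1 : r <= 1 by rewrite ler_pdivrMr // mul1r le_max lexx orbT.
exists (r / M'); first by rewrite divr_gt0.
have q_ge0 : 0 <= 1 - r ^+ 2 / 2 by nra.
exists (1 - r ^+ 2 / 2); first by apply/andP; split; nra.
move=> x; have coer := B_coercive x; have ReC := Re_ipC hip x (B x).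
have BM' : vnorm (B x) <= M' * vnorm x.
  by apply: le_trans (B_bounded x) (ler_wpM2r (vnorm_ge0 _) _); rewrite le_max lexx.
have Bx2 : vnorm (B x) ^+ 2 <= (M' * vnorm x) ^+ 2.
  by rewrite !expr2 ler_pM ?vnorm_ge0.
rewrite -ler_sqr ?nnegrE ?vnorm_ge0 ?mulr_ge0 ?vnorm_ge0 //.
have := vnorm_combination_sqr hip 1 (- (r / M')) x (B x).
rewrite scale1r rmorphN scaleNr => ->; rewrite -ReC.
have ek : r / M' * k = r ^+ 2 by rewrite /r; field; rewrite gt_eqF.
have eM : r / M' * M' = r by rewrite divfK ?gt_eqF.
have e_ge0 : 0 <= r / M' by rewrite divr_ge0 ?ltW.
have := ler_wpM2l e_ge0 coer; rewrite mulrA ek => coer'.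
have Bx2' : (r / M') ^+ 2 * vnorm (B x) ^+ 2 <= (r * vnorm x) ^+ 2.
  have -> : r * vnorm x = r / M' * (M' * vnorm x) by rewrite mulrA eM.
  by rewrite [leRHS]exprMn; apply: ler_wpM2l; rewrite ?sqr_ge0.
have := sqr_ge0 (r ^+ 2 * vnorm x); nra.
Qed.

Lemma coercive_surjective y : exists x, B x = y.
Proof.
have [eps eps_gt0 [q /andP[q_ge0 q_lt1] contr]] := coercive_damped_contraction.
pose f x := x - eps%:C *: B x + eps%:C *: y.
have [x fx] : exists x, f x = x.
  apply: (contraction_fixed_point q_ge0 q_lt1) => a b.
  suff -> : f a - f b = (a - b) - eps%:C *: B (a - b) by exact: contr.
  rewrite /f [X in _ - X]addrC addrKA opprD opprK addrACA.
  by rewrite (zmod_morphism_linear B_lin) scalerBr opprB (addrC (- _)).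
exists x; move: fx; rewrite /f -addrA -[RHS]addr0 => /addrI/eqP.
by rewrite addrC -scalerBr scaler_eq0 (inj_eq (@complexI R)) gt_eqF // subr_eq0 => /eqP.
Qed.

Lemma lax_milgram : exists S : V -> V,
  [/\ linear S, forall y, k * vnorm (S y) <= vnorm y, cancel B S & cancel S B].
Proof.
pose S y := sval (cid (coercive_surjective y)).
have BS : cancel S B := fun y => svalP (cid (coercive_surjective y)).
have SB : cancel B S := fun x => coercive_injective (BS (B x)).
exists S; split => //; first exact: linear_inverse B_lin SB BS.
by move=> y; have := coercive_lower_bound (S y); rewrite BS.
Qed.

End LaxMilgram.

Section Rotation.
Variable R : realType.

Lemma Re_rotated_form (tau k n t q : R) (u z : R[i]) :
  0 <= tau -> 0 <= n -> `|t| <= tau * n -> 0 <= q -> complex.Re u <= 0 ->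
  k <= complex.Re (u * z) - tau * `|complex.Im (u * z)| ->
  k * n <= complex.Re (u * (z * (n%:C + 'i * t%:C) - q%:C)).
Proof.
move=> tau_ge0 n_ge0 t_le q_ge0 u_le0 k_le.
have -> : complex.Re (u * (z * (n%:C + 'i * t%:C) - q%:C)) =
    n * complex.Re (u * z) - t * complex.Im (u * z) - q * complex.Re u.
  by case: (u) => ? ?; case: (z) => ? ? /=; ring.
have tI : t * complex.Im (u * z) <= tau * n * `|complex.Im (u * z)|.
  by apply: le_trans (ler_norm _) _; rewrite normrM ler_wpM2r.
have := ler_wpM2l n_ge0 k_le; have : 0 <= q * - complex.Re u by nra.
nra.
Qed.

Lemma rotation_exists (tau : R) (z : R[i]) : 0 <= tau ->
  complex.Re z < normc z / (tau + 2) ->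
  exists u : R[i], [/\ normc u = 1, complex.Re u <= 0 &
     normc z / (tau + 2) <= complex.Re (u * z) - tau * `|complex.Im (u * z)|].
Proof.
(* If Re z < 0, u rotates z onto the positive real axis; otherwise z is close
   to the imaginary axis and u = -i or u = i, according to the sign of Im z. *)
move=> tau_ge0; case: z => a b /=; set r := Num.sqrt _.
have r2 : r ^+ 2 = a ^+ 2 + b ^+ 2 by rewrite sqr_sqrtr ?addr_ge0 ?sqr_ge0.
have r_ge0 : 0 <= r := sqrtr_ge0 _.
have tau2_gt0 : 0 < tau + 2 by lra.
rewrite ltr_pdivlMr // => ar.
have [a_lt0|a_ge0] := ltP a 0.
  have r_gt0 : 0 < r by rewrite lt_def r_ge0 andbT; apply/eqP => r0; move: r2; rewrite r0; nra.
  exists ((a / r) +i* (- b / r)); split => /=.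
  - rewrite -sqrtr1; congr Num.sqrt.
    by rewrite !expr_div_n sqrrN -mulrDl -r2 divff // sqrf_eq0 gt_eqF.
  - by rewrite pmulr_lle0 ?invr_gt0 // ltW.
  - have -> : a / r * b + - b / r * a = 0 by ring.
    have -> : a / r * a - - b / r * b = r by rewrite -[RHS](mulfK (lt0r_neq0 r_gt0)) -expr2 r2; ring.
    by rewrite normr0 mulr0 subr0 ler_pdivrMr //; nra.
have tau_b : (1 + tau) * r <= `|b| * (tau + 2).
  rewrite -(ler_pXn2r (n := 2)) ?nnegrE ?mulr_ge0 ?normr_ge0 //; try lra.
  have a2 : (a * (tau + 2)) ^+ 2 < r ^+ 2.
    by rewrite ltr_pXn2r ?nnegrE ?mulr_ge0 //; lra.
  have b2 : a ^+ 2 * ((tau + 1) * (tau + 3)) < b ^+ 2 by move: a2; rewrite r2; nra.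
  by rewrite !exprMn r2 real_normK ?num_real //; nra.
have [b_ge0|b_lt0] := leP 0 b.
- exists (0 +i* (- 1)); split => /=.
  + by rewrite expr0n sqrrN expr1n add0r sqrtr1.
  + by [].
  + rewrite ger0_norm // in tau_b.
    rewrite mul0r mul0r sub0r mulN1r opprK add0r mulN1r normrN ger0_norm //.
    rewrite ler_pdivrMr //; nra.
- exists (0 +i* 1); split => /=.
  + by rewrite expr0n expr1n add0r sqrtr1.
  + by [].
  + rewrite ltr0_norm // in tau_b.
    rewrite !mul0r mul1r sub0r add0r mul1r ger0_norm //.
    rewrite ler_pdivrMr //; nra.
Qed.

End Rotation.

Section Sector.
Variable R : realType.

Lemma acos_lt_pihalf (c : R) : 0 < c <= 1 -> acos c < pi / 2.
Proof.
move=> /andP[c_gt0 c_le1].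
have c_itv : -1 <= c <= 1 by rewrite c_le1 andbT; lra.
have pi_gt0 := pi_gt0 R.
rewrite -(ltr_cos _ _) ?acosK ?cos_pihalf ?in_itv //= ?acos_ge0 ?acos_lepi //.
by apply/andP; split; lra.
Qed.

Lemma sector_Re_ge (th : R) (z : R[i]) :
  0 <= th <= pi -> cos th * normc z <= complex.Re z -> sector th z.
Proof.
move=> th_itv; have [->|z0] := eqVneq z 0; first by left.
move=> Re_ge; right; move: z z0 Re_ge => [a b] z0 /=; set r := Num.sqrt _ => Re_ge.
have r2 : r ^+ 2 = a ^+ 2 + b ^+ 2 by rewrite sqr_sqrtr ?addr_ge0 ?sqr_ge0.
have r_gt0 : 0 < r.
  rewrite lt_def sqrtr_ge0 andbT; apply/eqP => r0.
  by move/eqP: z0; apply; exact: (@eq0_normc R (a +i* b)).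
pose x := a / r.
have x_ge : cos th <= x by rewrite ler_pdivlMr.
have x_itv : -1 <= x <= 1.
  rewrite -ler_norml /x normf_div (ger0_norm (ltW r_gt0)) ler_pdivrMr // mul1r.
  rewrite -(ler_pXn2r (n := 2)) ?nnegrE ?normr_ge0 ?(ltW r_gt0) //.
  by rewrite real_normK ?num_real // r2 lerDl sqr_ge0.
have acos_le : acos x <= th.
  move: th_itv => /andP[th_ge0 th_le]; rewrite leNgt; apply/negP.
  rewrite -ltr_cos ?acosK ?in_itv //= ?th_ge0 ?th_le ?acos_ge0 ?acos_lepi //; lra.
have sin_acos_x : sin (acos x) = `|b| / r.
  rewrite sin_acos // -(ger0_norm (ltW r_gt0)) -normf_div -sqrtr_sqr; congr Num.sqrt.
  have r2_neq0 : r ^+ 2 != 0 by rewrite sqrf_eq0 gt_eqF.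
  apply: (mulIf r2_neq0); rewrite mulrBl mul1r -!exprMn !divfK ?gt_eqF // r2.
  ring.
exists (if 0 <= b then acos x else - acos x); split.
  by case: ifP; rewrite ?normrN ger0_norm ?acos_ge0.
have rK y : r * (y / r) = y by rewrite mulrC divfK ?gt_eqF.
rewrite normc_def -/r; apply/eqP; rewrite eq_complex /=.
case: (lerP 0 b) => b_sgn; rewrite ?cosN ?sinN acosK ?in_itv // sin_acos_x.
- by rewrite /x ger0_norm // !mul0r subr0 addr0 !rK !eqxx.
- by rewrite /x ltr0_norm // mulNr opprK !mul0r subr0 addr0 !rK !eqxx.
Qed.

Lemma Re_lt_not_sector (c th : R) (z : R[i]) : 0 <= th <= pi -> cos th <= c ->
  ~ sector th z -> complex.Re z < c * normc z.
Proof.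
move=> th_itv cos_le z_out; rewrite ltNge; apply/negP => Re_ge.
apply/z_out/sector_Re_ge => //; apply: le_trans Re_ge.
by rewrite ler_wpM2r // normc_ge0.
Qed.

End Sector.

Section Sectorial.
Variables (R : realType) (V : normedModType R[i]).

Lemma sectorial_acos (A : V -> V) (c K : R) : bounded_op A -> 0 < c < 1 ->
  (forall z : R[i], complex.Re z < c * normc z ->
     exists2 Rz, bounded_op Rz /\ is_inverse (fun x => z *: x - A x) Rz
       & forall y, normc z * vnorm (Rz y) <= K * vnorm y) ->
  sectorial A (acos c).
Proof.
move=> A_bd /andP[c_gt0 c_lt1] resolvent.
have c_itv : -1 <= c <= 1 by apply/andP; split; lra.
have th_itv : 0 <= acos c <= pi by rewrite acos_ge0 ?acos_lepi.
have cos_th : cos (acos c) = c by rewrite acosK ?in_itv.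
have cos_le : cos (acos c) <= c by rewrite cos_th.
split => //.
- by rewrite acos_gt0 ?acos_ltpi //; apply/andP; split; lra.
- move=> z z_spec; have [//|z_out] := pselect (sector (acos c) z).
  have [Rz [Rz_bd Rz_inv] _] := resolvent z (Re_lt_not_sector th_itv cos_le z_out).
  by case: z_spec; exists Rz.
move=> th' /andP[th_lt th'_lt]; exists K => z z_out S _ [SF _] x.
have th'_itv : 0 <= th' <= pi by apply/andP; split; lra.
have cos_le' : cos th' <= c by rewrite -cos_th ltW // ltr_cos ?in_itv.
have [Rz [_ [_ FRz]] Rz_bd] := resolvent z (Re_lt_not_sector th'_itv cos_le' z_out).
by rewrite -[in S x](FRz x) SF ler_vnorm vnormZ.
Qed.

End Sectorial.

Section ResolventQS.
Variables (R : realType) (V : completeNormedModType R[i]) (ip : V -> V -> R[i]).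
Variables (T Q : V -> V) (tau qn : R).
Hypotheses (hip : inner_product ip) (T_lin : linear T) (Q_lin : linear Q)
  (tau_ge0 : 0 <= tau) (T_bd : forall x, vnorm (T x) <= tau * vnorm x)
  (Q_bd : forall x, vnorm (Q x) <= qn * vnorm x)
  (T_sa : selfadjoint ip T) (Q_ge0 : forall x, 0 <= ip (Q x) x).

Let IiT x := x + 'i *: T x.

Lemma IiT_linear : linear IiT.
Proof. exact: linear_add (linear_scale _ T_lin). Qed.

Lemma IiT_bounded x : vnorm (IiT x) <= (1 + tau) * vnorm x.
Proof.
apply: le_trans (vnormD _ _) _; rewrite vnormZ.
have -> : normc ('i : R[i]) = 1 by rewrite /= expr0n expr1n add0r sqrtr1.
by rewrite mulrDl mul1r mul1r lerD2l.
Qed.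

Lemma ip_IiT x :
  ip (IiT x) x = (vnorm x ^+ 2)%:C + 'i * (complex.Re (ip (T x) x))%:C.
Proof. by rewrite ipDl // ipZl // ipxx // -(ip_selfadjoint_real hip _ T_sa). Qed.

Lemma IiT_coercive x : 1 * vnorm x ^+ 2 <= complex.Re (ip (IiT x) x).
Proof. by rewrite ip_IiT /= !mul0r !mul1r subr0 addr0. Qed.

Lemma rotated_coercive (z : R[i]) : complex.Re z < normc z / (tau + 2) ->
  exists2 u : R[i], normc u = 1 & forall x,
    normc z / (tau + 2) * vnorm x ^+ 2 <=
    complex.Re (ip (u *: (z *: IiT x - Q x)) x).
Proof.
move=> z_out; have [u [u1 Re_u rot]] := rotation_exists tau_ge0 z_out.
exists u => // x.
have Qx_ge0 : 0 <= complex.Re (ip (Q x) x) by move: (Q_ge0 x); rewrite lecE => /andP[].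
rewrite ipZl // ipDl // ipZl // ipNl // ip_IiT -(RRe_real (ger0_real (Q_ge0 x))).
apply: (Re_rotated_form tau_ge0) rot => //; first exact: sqr_ge0.
by have := Re_ip_bounded hip T_bd x.
Qed.

Variable S : V -> V.
Hypotheses (SK : cancel IiT S) (IiTK : cancel S IiT).

Lemma resolvent_QS (z : R[i]) : complex.Re z < normc z / (tau + 2) ->
  exists2 Rz, bounded_op Rz /\ is_inverse (fun y => z *: y - Q (S y)) Rz
    & forall y, normc z * vnorm (Rz y) <= (1 + tau) * (tau + 2) * vnorm y.
Proof.
move=> z_out; have [u u1 W_coercive] := rotated_coercive z_out.
have tau2_gt0 : 0 < tau + 2 by rewrite ltr_wpDl.
have z_gt0 : 0 < normc z.
  rewrite lt_def normc_ge0 andbT; apply: contraTneq z_out => /eq0_normc ->.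
  by rewrite normc0 mul0r ltxx.
pose W x := u *: (z *: IiT x - Q x).
have W_lin : linear W := linear_scale u (linear_sub (linear_scale z IiT_linear) Q_lin).
have W_bd x : vnorm (W x) <= (normc z * (1 + tau) + qn) * vnorm x.
  rewrite vnormZ u1 mul1r mulrDl; apply: le_trans (vnormD _ _) _.
  rewrite vnormN vnormZ -mulrA; apply: lerD => //.
  by apply: ler_wpM2l; [exact: normc_ge0 | exact: IiT_bounded].
have k_gt0 : 0 < normc z / (tau + 2) by rewrite divr_gt0.
have [S' [S'_lin S'_bd S'K WK]] := lax_milgram hip W_lin W_bd k_gt0 W_coercive.
have u_neq0 : u != 0.
  by apply/eqP => u0; move: u1; rewrite u0 normc0 => /esym/eqP; rewrite oner_eq0.
(* (z - QS)^-1 = (I + iT) W^-1, and W^-1 y = S' (u y) as S' inverts u W. *)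
pose Rz y := IiT (S' (u *: y)).
have Rz_bd y : normc z * vnorm (Rz y) <= (1 + tau) * (tau + 2) * vnorm y.
  apply: le_trans (ler_wpM2l (normc_ge0 z) (IiT_bounded _)) _.
  have := S'_bd (u *: y); rewrite vnormZ u1 mul1r => S'y.
  have -> : normc z * ((1 + tau) * vnorm (S' (u *: y))) =
      (1 + tau) * (tau + 2) * (normc z / (tau + 2) * vnorm (S' (u *: y))).
    by field; rewrite lt0r_neq0.
  by apply: ler_wpM2l S'y; rewrite mulr_ge0 ?addr_ge0 // ltW.
exists Rz; last exact: Rz_bd.
split; last split.
- apply/bounded_opP; split.
    have uZ_lin : linear (fun y : V => u *: y) := linear_scale u (@linear_id _ V).
    exact: linear_comp IiT_linear (linear_comp S'_lin uZ_lin).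
  exists ((1 + tau) * (tau + 2) / normc z); first by rewrite divr_ge0 ?mulr_ge0 ?addr_ge0 ?normc_ge0 // ltW.
  by move=> y; rewrite mulrAC ler_pdivlMr // mulrC Rz_bd.
- move=> x; rewrite /Rz /=.
  have -> : u *: (z *: x - Q (S x)) = W (S x) by rewrite /W IiTK.
  by rewrite S'K IiTK.
- move=> y; apply: (scalerI u_neq0); rewrite /= /Rz SK.
  exact: WK.
Qed.

End ResolventQS.

Theorem lemma2p3 (R : realType) (V : completeNormedModType R[i])
    (ip : V -> V -> R[i]) (T Q : V -> V) :
  inner_product ip ->
  bounded_op T -> selfadjoint ip T ->
  bounded_op Q -> selfadjoint ip Q ->
  (forall x : V, 0 <= ip (Q x) x) ->
  exists S : V -> V,
    [/\ bounded_op S, is_inverse (fun x => x + (0 +i* 1) *: T x) S &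
        exists theta : R, theta < pi / 2 /\ sectorial (fun x => Q (S x)) theta].
Proof.
move=> hip /bounded_opP[T_lin [tau tau_ge0 T_bd]] T_sa.
move=> /bounded_opP[Q_lin [qn qn_ge0 Q_bd]] _ Q_ge0.
have [S [S_lin S_bd SK IiTK]] :=
  lax_milgram hip (IiT_linear T_lin) (IiT_bounded T_bd) ltr01 (IiT_coercive hip T_sa).
have tau2_gt1 : 1 < tau + 2 by lra.
exists S; split.
- by apply/bounded_opP; split; last by exists 1 => // y; rewrite mul1r -[leLHS]mul1r.
- by [].
exists (acos (tau + 2)^-1); split.
  by rewrite acos_lt_pihalf // invr_gt0 invf_le1 ?ltW //; lra.
apply: (sectorial_acos (K := (1 + tau) * (tau + 2))).
- apply/bounded_opP; split; first exact: linear_comp Q_lin S_lin.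
  exists qn => // x; apply: le_trans (Q_bd _) _.
  by apply: ler_wpM2l => //; rewrite -[leLHS]mul1r.
- by rewrite invr_gt0 invf_lt1; lra.
- move=> z; rewrite mulrC => z_out.
  exact: (resolvent_QS hip T_lin Q_lin tau_ge0 T_bd Q_bd T_sa Q_ge0 SK IiTK z_out).
Qed.
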